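(* For every integer $t\ge 1$ and every even integer $j$, the limit $$g_{22}(t,j)=\lim_{L\to\infty,\ L\text{ even}}\mathbb{E}_L\big[(h^{2t+2}_j-h^{2t}_j)(h^2_0-h^0_0)\big]$$ exists and $$g_{22}(t,j)=-\tfrac14\big[g_{11}(t-1,j)-g_{11}(t,j)\big],$$ where $g_{11}(s,j)=\frac{2^{-2s+1}(2s)!}{(s-\frac{j}{2})!(s+\frac{j}{2})!}$ for $|j|\le 2s$ and $g_{11}(s,j)=0$ for $|j|>2s$ (for $s\ge0$, $j$ even).
   Context: Let $L\ge 2$ be an even integer and index sites by $i\in\mathbb{Z}/L\mathbb{Z}$. The initial interface $h^0$ is ''distributed'' according to the un-normalized measure $\mu(dh^0)=\prod_i e^{-\frac12(h^0_{i+1}-h^0_i)^2}\,dh^0_i$; concretely, only height differences are meaningful and the increment vector $(h^0_{i+1}-h^0_i)_i$ has the law of i.i.d. standard Gaussians conditioned on having sum zero. Dynamics: for $t\ge1$, independently for each $i$ with $i+t$ even, $h^t_i=\tfrac12(h^{t-1}_{i-1}+h^{t-1}_{i+1})+\xi^t_i$ with $\xi^t_i$ independent centered Gaussians of variance $1/2$; $h^t_i=h^{t-1}_i$ for $i+t$ odd. $\mathbb{E}_L$ is expectation for this process on $\mathbb{Z}/L\mathbb{Z}$. *)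

From Stdlib Require Import Reals Arith ZArith Lia.
Open Scope R_scope.

(* A centered Gaussian "random variable" in the span of the sources, represented
   by its coefficients:
   - fst : coefficients on the initial heights h^0_k (k < L),
   - snd : coefficients on the noises xi^u_v (time u >= 1, site v < L). *)
Definition form := ((nat -> R) * (nat -> nat -> R))%type.

Definition fsub (X Y : form) : form :=
  (fun k => fst X k - fst Y k, fun u v => snd X u v - snd Y u v).

(* h^t_i as a linear form, for i a site index (taken mod L). *)
Fixpoint hf (L t i : nat) : form :=
  match t with
  | O => (fun k => if Nat.eqb k (i mod L) then 1 else 0, fun _ _ => 0)
  | S s =>
      if Nat.even (i mod L + S s) then
        let X1 := hf L s (i mod L + L - 1) in
        let X2 := hf L s (i mod L + 1) in
        (fun k => (fst X1 k + fst X2 k) / 2,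
         fun u v => (snd X1 u v + snd X2 u v) / 2
                    + (if andb (Nat.eqb u (S s)) (Nat.eqb v (i mod L)) then 1 else 0))
      else hf L s i
  end.

Definition hZ (L t : nat) (j : Z) : form :=
  hf L t (Z.to_nat (Z.modulo j (Z.of_nat L))).

Fixpoint sumR (n : nat) (f : nat -> R) : R :=
  match n with O => 0 | S m => sumR m f + f m end.

(* sum_i a_i h^0_i = (sum a) h^0_0 + sum_k eta_k * cum a k, with
   eta_k = h^0_{k+1} - h^0_k (k = 0..L-1), cum a k = sum_{k < i < L} a_i. *)
Definition cum (L : nat) (a : nat -> R) (k : nat) : R :=
  sumR L (fun i => if Nat.ltb k i then a i else 0).

(* E_L[X Y] for X, Y whose h^0-coefficients sum to zero (so that they are
   functions of height differences only) and whose noise coefficients vanish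
   after time N.  Increments: i.i.d. N(0,1) conditioned on sum zero, i.e.
   Cov(eta_k, eta_l) = delta_kl - 1/L; noises independent, variance 1/2. *)
Definition EL (L N : nat) (X Y : form) : R :=
  sumR L (fun k => sumR L (fun l =>
     cum L (fst X) k * cum L (fst Y) l *
     ((if Nat.eqb k l then 1 else 0) - / INR L)))
  + sumR N (fun u => sumR L (fun v => / 2 * snd X (S u) v * snd Y (S u) v)).

Definition g11 (s : nat) (j : Z) : R :=
  if Z.leb (Z.abs j) (2 * Z.of_nat s) then
    2 * INR (fact (2 * s)) /
    (4 ^ s * INR (fact (Z.to_nat (Z.of_nat s - j / 2)))
           * INR (fact (Z.to_nat (Z.of_nat s + j / 2))))
  else 0.

From Stdlib Require Import Reals Arith ZArith Lia Lra.
Open Scope R_scope.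

(* Every height is a linear form in the initial heights and the noises, whose
   coefficients obey the averaging recursion of the dynamics.  On the torus of
   size L = 2h these coefficients, for sources near the origin, coincide with
   the solutions of the same recursion on Z until time h - 3, because nothing
   has yet travelled around the torus.  On Z the coefficient of h^0_0 in h^T_j
   is the kernel K T j = C(T, (T+j)/2) / 2^T of a simple random walk, so that
   g11 s j = 2 K (2s) j; the coefficients of the noises entering h^2_0 - h^0_0
   (xi^2_0, and xi^1_{+-1} with weight 1/2) are time-shifts of K.  Pairing with
   h^2_0 - h^0_0 only sees these few coefficients; in the initial part this is
   because the increment h^{2t+2}_j - h^{2t}_j has initial coefficients that
   sum to zero and vanish at odd sites.  This gives the value
   (K(2t) j - K(2t-2) j)/2 exactly, for every even L large enough. *)

Lemma sumR_ext n f g : (forall i, (i < n)%nat -> f i = g i) -> sumR n f = sumR n g.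
Proof.
  induction n as [|n IH]; intros Hfg; simpl; [reflexivity|].
  rewrite IH by (intros; apply Hfg; lia). rewrite Hfg by lia. reflexivity.
Qed.

Lemma sumR_add n f g : sumR n (fun i => f i + g i) = sumR n f + sumR n g.
Proof. induction n as [|n IH]; simpl; [lra|]. rewrite IH; lra. Qed.

Lemma sumR_sub n f g : sumR n (fun i => f i - g i) = sumR n f - sumR n g.
Proof. induction n as [|n IH]; simpl; [lra|]. rewrite IH; lra. Qed.

Lemma sumR_scal n c f : sumR n (fun i => c * f i) = c * sumR n f.
Proof. induction n as [|n IH]; simpl; [lra|]. rewrite IH; lra. Qed.

Lemma sumR_delta n p c :
  sumR n (fun i => if Nat.eqb i p then c else 0) = if Nat.ltb p n then c else 0.
Proof.
  induction n as [|n IH]; simpl; [reflexivity|]. rewrite IH.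
  destruct (Nat.eqb_spec n p), (Nat.ltb_spec p n), (Nat.ltb_spec p (S n)); lia || lra.
Qed.

Lemma sumR_count_lt n p : sumR n (fun k => if Nat.ltb k p then 1 else 0) = INR (Nat.min n p).
Proof.
  induction n as [|n IH]; [reflexivity|]. simpl sumR. rewrite IH.
  destruct (Nat.ltb_spec n p).
  - replace (Nat.min (S n) p) with (S (Nat.min n p)) by lia. rewrite S_INR. lra.
  - replace (Nat.min (S n) p) with (Nat.min n p) by lia. lra.
Qed.

Lemma sumR_trunc n p f :
  (p <= n)%nat -> sumR n (fun i => if Nat.ltb i p then f i else 0) = sumR p f.
Proof.
  induction n as [|n IH]; intros Hp.
  - replace p with 0%nat by lia. reflexivity.
  - destruct (Nat.eq_dec p (S n)) as [->|Hne].
    + apply sumR_ext. intros i Hi. destruct (Nat.ltb_spec i (S n)); [reflexivity|lia].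
    + simpl. rewrite IH by lia. destruct (Nat.ltb_spec n p); [lia|lra].
Qed.

Lemma cum_eq L a k : (k < L)%nat -> cum L a k = sumR L a - sumR (S k) a.
Proof.
  intros Hk. unfold cum. rewrite <- (sumR_trunc L (S k) a), <- sumR_sub by lia.
  apply sumR_ext. intros i _. destruct (Nat.ltb_spec k i), (Nat.ltb_spec i (S k)); lia || lra.
Qed.

Lemma sumR_centered_cov L a b :
  sumR L (fun k => sumR L (fun l => a k * b l * ((if Nat.eqb k l then 1 else 0) - / INR L)))
  = sumR L (fun k => a k * (b k - / INR L * sumR L b)).
Proof.
  apply sumR_ext. intros k Hk.
  rewrite (sumR_ext _ _ (fun l => (if Nat.eqb l k then a k * b k else 0) + (- (a k * / INR L)) * b l)).
  - rewrite sumR_add, sumR_delta, sumR_scal. destruct (Nat.ltb_spec k L); [lra|lia].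
  - intros l _. destruct (Nat.eqb_spec l k), (Nat.eqb_spec k l); subst; lia || lra.
Qed.

Definition ind (b : bool) : R := if b then 1 else 0.

(** Coefficients of the heights on the line Z in a fixed source, with initial
    values [b] and a contribution [g u x] of the noise at time [u], site [x]. *)
Fixpoint line_coef (b : Z -> R) (g : nat -> Z -> R) (T : nat) (x : Z) : R :=
  match T with
  | O => b x
  | S s =>
      if Z.even (x + Z.of_nat (S s))
      then (line_coef b g s (x - 1) + line_coef b g s (x + 1)) / 2 + g (S s) x
      else line_coef b g s x
  end.

Section LocalSources.

Variables (b : Z -> R) (g : nat -> Z -> R).
Hypothesis b_local : forall x, (1 < Z.abs x)%Z -> b x = 0.
Hypothesis g_local : forall u x, (1 < Z.abs x)%Z -> g u x = 0.

Lemma line_coef_local T x : (Z.of_nat T + 1 < Z.abs x)%Z -> line_coef b g T x = 0.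
Proof.
  revert x; induction T as [|T IH]; intros x Hx; simpl line_coef.
  - apply b_local; lia.
  - rewrite g_local by lia. destruct (Z.even _).
    + rewrite !IH by lia. lra.
    + apply IH; lia.
Qed.

End LocalSources.

Lemma Z_even_of_nat n : Z.even (Z.of_nat n) = Nat.even n.
Proof.
  induction n as [|n IH]; [reflexivity|].
  rewrite Nat2Z.inj_succ, Z.even_succ, <- Z.negb_even, IH, Nat.even_succ, <- Nat.negb_even.
  reflexivity.
Qed.

Definition zrep (h i : nat) : Z :=
  let r := i mod (2 * h) in
  if Nat.leb r h then Z.of_nat r else (Z.of_nat r - Z.of_nat (2 * h))%Z.

Lemma zrep_mod h i : zrep h (i mod (2 * h)) = zrep h i.
Proof. unfold zrep. rewrite Nat.Div0.mod_mod. reflexivity. Qed.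

Lemma zrep_even h i k :
  (1 <= h)%nat -> Nat.even (i mod (2 * h) + k) = Z.even (zrep h i + Z.of_nat k).
Proof.
  intros Hh. unfold zrep. set (r := i mod (2 * h)).
  destruct (Nat.leb_spec r h).
  - rewrite <- Nat2Z.inj_add, Z_even_of_nat. reflexivity.
  - replace (Z.of_nat r - Z.of_nat (2 * h) + Z.of_nat k)%Z
      with (Z.of_nat (r + k) - 2 * Z.of_nat h)%Z by lia.
    rewrite Z.even_sub, Z_even_of_nat, Z.even_mul.
    destruct (Nat.even (r + k)); reflexivity.
Qed.

(** Away from the antipode of 0, the two neighbours of a site of the ring are
    represented by the neighbours on the line. *)
Lemma zrep_pred h i : (2 <= h)%nat ->
  zrep h (i mod (2 * h) + 2 * h - 1) = (zrep h i - 1)%Z \/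
  ((Z.of_nat h - 1 <= Z.abs (zrep h (i mod (2 * h) + 2 * h - 1)))%Z
   /\ (Z.of_nat h - 1 <= Z.abs (zrep h i - 1))%Z).
Proof.
  intros Hh. rewrite <- (zrep_mod h i).
  assert (Hr : (i mod (2 * h) < 2 * h)%nat) by (apply Nat.mod_upper_bound; lia).
  set (r := i mod (2 * h)) in *.
  assert (Hm : ((r + 2 * h - 1) mod (2 * h) = if Nat.eqb r 0 then 2 * h - 1 else r - 1)%nat).
  { destruct (Nat.eqb_spec r 0) as [->|Hr0]; [apply Nat.mod_small; lia|].
    replace (r + 2 * h - 1)%nat with ((r - 1) + 1 * (2 * h))%nat by lia.
    rewrite Nat.Div0.mod_add. apply Nat.mod_small. lia. }
  unfold zrep. rewrite Hm, (Nat.mod_small r) by lia.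
  destruct (Nat.eqb_spec r 0), (Nat.leb_spec r h);
    repeat match goal with |- context [Nat.leb ?a ?b] => destruct (Nat.leb_spec a b) end; lia.
Qed.

Lemma zrep_succ h i : (2 <= h)%nat ->
  zrep h (i mod (2 * h) + 1) = (zrep h i + 1)%Z \/
  ((Z.of_nat h - 1 <= Z.abs (zrep h (i mod (2 * h) + 1)))%Z
   /\ (Z.of_nat h - 1 <= Z.abs (zrep h i + 1))%Z).
Proof.
  intros Hh. rewrite <- (zrep_mod h i).
  assert (Hr : (i mod (2 * h) < 2 * h)%nat) by (apply Nat.mod_upper_bound; lia).
  set (r := i mod (2 * h)) in *.
  assert (Hm : ((r + 1) mod (2 * h) = if Nat.eqb (r + 1) (2 * h) then 0 else r + 1)%nat).
  { destruct (Nat.eqb_spec (r + 1) (2 * h)) as [->|Hr1];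
      [apply Nat.Div0.mod_same | apply Nat.mod_small; lia]. }
  unfold zrep. rewrite Hm, (Nat.mod_small r) by lia.
  destruct (Nat.eqb_spec (r + 1) (2 * h)), (Nat.leb_spec r h);
    repeat match goal with |- context [Nat.leb ?a ?b] => destruct (Nat.leb_spec a b) end; lia.
Qed.

(** A field on the ring Z/2hZ obeying the recursion of [line_coef] agrees with
    it up to time h - 3: local sources have not yet spread around the ring. *)
Lemma ring_coef_eq_line (h : nat) (M : nat -> nat -> R) (b : Z -> R) (g : nat -> Z -> R) :
  (forall x, (1 < Z.abs x)%Z -> b x = 0) -> (forall u x, (1 < Z.abs x)%Z -> g u x = 0) ->
  (forall i, M 0%nat i = b (zrep h i)) ->
  (forall s i, M (S s) i =
     if Nat.even (i mod (2 * h) + S s)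
     then (M s (i mod (2 * h) + 2 * h - 1)%nat + M s (i mod (2 * h) + 1)%nat) / 2 + g (S s) (zrep h i)
     else M s i) ->
  forall T i, (T + 3 <= h)%nat -> M T i = line_coef b g T (zrep h i).
Proof.
  intros Hb Hg M0 MS. induction T as [|T IH]; intros i Hh; [apply M0|].
  rewrite MS. cbn [line_coef]. rewrite zrep_even by lia.
  destruct (Z.even _); [|apply IH; lia].
  rewrite !IH by lia. do 3 f_equal.
  - destruct (zrep_pred h i) as [->|[E1 E2]]; [lia|reflexivity|].
    rewrite !(line_coef_local b g Hb Hg) by lia. reflexivity.
  - destruct (zrep_succ h i) as [->|[E1 E2]]; [lia|reflexivity|].
    rewrite !(line_coef_local b g Hb Hg) by lia. reflexivity.
Qed.

Lemma line_coef_ext b b' g T x :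
  (forall y, b y = b' y) -> line_coef b g T x = line_coef b' g T x.
Proof.
  intros Hb. revert x; induction T as [|T IH]; intros x; simpl; [apply Hb|].
  rewrite !IH. reflexivity.
Qed.

Definition no_source : nat -> Z -> R := fun _ _ => 0.

(** The dynamics only depends on the parity of time, so after an even time [s]
    past the last noise it restarts from the current coefficients. *)
Lemma line_coef_restart b g s m x :
  Nat.even s = true -> (forall u y, (s < u)%nat -> g u y = 0) ->
  line_coef b g (s + m) x = line_coef (line_coef b g s) no_source m x.
Proof.
  intros Hs Hg. revert x; induction m as [|m IH]; intros x.
  - rewrite Nat.add_0_r. reflexivity.
  - rewrite Nat.add_succ_r. cbn [line_coef]. rewrite !IH, Hg by lia. unfold no_source.
    replace (x + Z.of_nat (S (s + m)))%Z with (x + Z.of_nat (S m) + Z.of_nat s)%Z by lia.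
    rewrite (Z.even_add _ (Z.of_nat s)), Z_even_of_nat, Hs.
    destruct (Z.even (x + Z.of_nat (S m))); reflexivity.
Qed.

Definition kernel : nat -> Z -> R := line_coef (fun x => ind (Z.eqb x 0)) no_source.

Lemma kernel_local T x : (Z.of_nat T + 1 < Z.abs x)%Z -> kernel T x = 0.
Proof.
  apply line_coef_local; [|reflexivity].
  intros y Hy. unfold ind. destruct (Z.eqb_spec y 0); [lia|reflexivity].
Qed.

Lemma C_n_0 n : C n 0 = 1.
Proof.
  unfold C. rewrite Nat.sub_0_r. simpl fact. rewrite Rmult_1_l. apply Rinv_r, INR_fact_neq_0.
Qed.

Lemma C_n_n n : C n n = 1.
Proof. unfold C. rewrite Nat.sub_diag. simpl fact. rewrite Rmult_1_r. apply Rinv_r, INR_fact_neq_0. Qed.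

Lemma kernel_binomial T a :
  (a <= T)%nat -> kernel T (2 * Z.of_nat a - Z.of_nat T) = C T a / 2 ^ T.
Proof.
  revert a; induction T as [|T IH]; intros a Ha.
  - replace a with 0%nat by lia. unfold kernel, ind. simpl. rewrite C_n_0. lra.
  - unfold kernel; cbn [line_coef]; fold kernel. unfold no_source.
    replace (2 * Z.of_nat a - Z.of_nat (S T) + Z.of_nat (S T))%Z with (2 * Z.of_nat a)%Z by lia.
    rewrite Z.even_mul. cbn [Z.even orb].
    assert (H2 : 2 ^ S T <> 0) by (apply pow_nonzero; lra). simpl pow in *.
    destruct a as [|a].
    + rewrite (kernel_local T) by lia.
      replace (2 * Z.of_nat 0 - Z.of_nat (S T) + 1)%Z with (2 * Z.of_nat 0 - Z.of_nat T)%Z by lia.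
      rewrite IH, !C_n_0 by lia. field. lra.
    + replace (2 * Z.of_nat (S a) - Z.of_nat (S T) - 1)%Z with (2 * Z.of_nat a - Z.of_nat T)%Z by lia.
      replace (2 * Z.of_nat (S a) - Z.of_nat (S T) + 1)%Z
        with (2 * Z.of_nat (S a) - Z.of_nat T)%Z by lia.
      rewrite (IH a) by lia.
      destruct (Nat.eq_dec a T) as [->|Hne].
      * rewrite (kernel_local T) by lia. rewrite !C_n_n. field. lra.
      * rewrite (IH (S a)), <- pascal by lia. field. lra.
Qed.

Lemma g11_kernel s j : Z.Even j -> g11 s j = 2 * kernel (2 * s) j.
Proof.
  intros [m ->]. unfold g11.
  destruct (Z.leb_spec (Z.abs (2 * m)) (2 * Z.of_nat s)).
  - rewrite (Z.mul_comm 2 m), Z_div_mult by lia.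
    set (a := Z.to_nat (Z.of_nat s + m)).
    replace (Z.to_nat (Z.of_nat s - m)) with (2 * s - a)%nat by lia.
    replace (m * 2)%Z with (2 * Z.of_nat a - Z.of_nat (2 * s))%Z by lia.
    rewrite kernel_binomial by lia. unfold C.
    rewrite pow_mult. replace (2 ^ 2) with 4 by lra.
    pose proof (INR_fact_neq_0 a). pose proof (INR_fact_neq_0 (2 * s - a)).
    pose proof (pow_nonzero 4 s ltac:(lra)).
    field. auto.
  - rewrite kernel_local by lia. lra.
Qed.

Definition noise2_coef : nat -> Z -> R :=
  line_coef (fun _ => 0) (fun u x => ind (Nat.eqb u 2 && Z.eqb x 0)).

(** xi^1_1 and xi^1_-1 enter h^2_0 - h^0_0 with weight 1/2 each. *)
Definition noise1_coef : nat -> Z -> R :=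
  line_coef (fun _ => 0) (fun u x => ind (Nat.eqb u 1) * (ind (Z.eqb x 1) + ind (Z.eqb x (-1))) / 2).

Lemma noise2_coef_kernel m x : noise2_coef (2 + m) x = kernel m x.
Proof.
  unfold noise2_coef. rewrite line_coef_restart by
    (reflexivity || (intros u y Hu; unfold ind; destruct (Nat.eqb_spec u 2); [lia|reflexivity])).
  apply line_coef_ext. intros y. cbn [line_coef].
  rewrite ?Z.even_add, ?Z.even_sub. unfold ind. cbn [Nat.eqb andb Z.even Z.of_nat Pos.of_succ_nat Pos.succ].
  destruct (Z.even y) eqn:Ey, (Z.eqb_spec y 0); subst; cbn [Bool.eqb]; try discriminate; lra.
Qed.

Lemma noise1_coef_kernel m x : noise1_coef (2 + m) x = kernel (2 + m) x.
Proof.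
  unfold noise1_coef, kernel. rewrite !line_coef_restart by
    (reflexivity || (intros u y Hu; unfold ind, no_source; destruct (Nat.eqb_spec u 1); [lia|lra])).
  apply line_coef_ext. intros y. cbn [line_coef]. unfold no_source.
  rewrite ?Z.even_add, ?Z.even_sub. unfold ind. cbn [Nat.eqb andb Z.even Z.of_nat Pos.of_succ_nat Pos.succ].
  destruct (Z.even y) eqn:Ey; cbn [Bool.eqb];
    repeat match goal with |- context [Z.eqb ?a ?b] => destruct (Z.eqb_spec a b) end;
    subst; try discriminate; try lia; lra.
Qed.

Lemma hf_S L s i : hf L (S s) i =
  if Nat.even (i mod L + S s) then
    let X1 := hf L s (i mod L + L - 1) in
    let X2 := hf L s (i mod L + 1) in
    (fun k => (fst X1 k + fst X2 k) / 2,
     fun u v => (snd X1 u v + snd X2 u v) / 2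
                + (if andb (Nat.eqb u (S s)) (Nat.eqb v (i mod L)) then 1 else 0))
  else hf L s i.
Proof. reflexivity. Qed.

Lemma hf_init_sum L T i : (0 < L)%nat -> sumR L (fst (hf L T i)) = 1.
Proof.
  intros HL. revert i; induction T as [|T IH]; intros i.
  - cbn [hf fst]. rewrite sumR_delta. destruct (Nat.ltb_spec (i mod L) L); [reflexivity|].
    pose proof (Nat.mod_upper_bound i L). lia.
  - rewrite hf_S. destruct (Nat.even _); [|apply IH]. cbn [fst].
    rewrite (sumR_ext _ _ (fun k => / 2 * fst (hf L T (i mod L + L - 1)) k
                                   + / 2 * fst (hf L T (i mod L + 1)) k)) by (intros; lra).
    rewrite sumR_add, !sumR_scal, !IH. lra.
Qed.

Lemma even_mod_even h x : (1 <= h)%nat -> Nat.even (x mod (2 * h)) = Nat.even x.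
Proof.
  intros Hh. rewrite (Nat.div_mod x (2 * h)) at 2 by lia.
  rewrite Nat.add_comm, <- Nat.mul_assoc, Nat.even_add_mul_2. reflexivity.
Qed.

Lemma hf_init_odd h T i c :
  (1 <= h)%nat -> (1 <= T)%nat -> Nat.even c = false -> fst (hf (2 * h) T i) c = 0.
Proof.
  intros Hh HT Hc. revert i; induction T as [|[|T] IH]; intros i; [lia| |].
  - rewrite hf_S. set (r := i mod (2 * h)).
    assert (Hpar : forall x, Nat.even (x mod (2 * h)) = Nat.even x) by (intros; apply even_mod_even; lia).
    destruct (Nat.even (r + 1)) eqn:E; cbn [hf fst]; fold r.
    + replace (r + 2 * h - 1)%nat with ((r + 1) + 2 * (h - 1))%nat by lia.
      destruct (Nat.eqb_spec c ((r + 1 + 2 * (h - 1)) mod (2 * h))) as [E1|E1];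
        [rewrite E1, Hpar, Nat.even_add_mul_2, E in Hc; discriminate|].
      destruct (Nat.eqb_spec c ((r + 1) mod (2 * h))) as [E2|E2];
        [rewrite E2, Hpar, E in Hc; discriminate|]. lra.
    + destruct (Nat.eqb_spec c r) as [->|]; [|reflexivity].
      rewrite Nat.add_1_r, Nat.even_succ, <- Nat.negb_even, Hc in E. discriminate.
  - rewrite hf_S. destruct (Nat.even (_ + S (S T))); cbn [fst]; rewrite ?IH by lia; lra.
Qed.

Lemma zrep_eqb_0 h i : (1 <= h)%nat -> Z.eqb (zrep h i) 0 = Nat.eqb (i mod (2 * h)) 0.
Proof.
  intros Hh. pose proof (Nat.mod_upper_bound i (2 * h)). unfold zrep.
  destruct (Nat.leb_spec (i mod (2 * h)) h), (Nat.eqb_spec (i mod (2 * h)) 0);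
    apply Z.eqb_eq || apply Z.eqb_neq; lia.
Qed.

Lemma zrep_eqb_1 h i : (1 <= h)%nat -> Z.eqb (zrep h i) 1 = Nat.eqb (i mod (2 * h)) 1.
Proof.
  intros Hh. pose proof (Nat.mod_upper_bound i (2 * h)). unfold zrep.
  destruct (Nat.leb_spec (i mod (2 * h)) h), (Nat.eqb_spec (i mod (2 * h)) 1);
    apply Z.eqb_eq || apply Z.eqb_neq; lia.
Qed.

Lemma zrep_eqb_m1 h i : (2 <= h)%nat -> Z.eqb (zrep h i) (-1) = Nat.eqb (i mod (2 * h)) (2 * h - 1).
Proof.
  intros Hh. pose proof (Nat.mod_upper_bound i (2 * h)). unfold zrep.
  destruct (Nat.leb_spec (i mod (2 * h)) h), (Nat.eqb_spec (i mod (2 * h)) (2 * h - 1));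
    apply Z.eqb_eq || apply Z.eqb_neq; lia.
Qed.

Lemma hf_init0_kernel h T i :
  (T + 3 <= h)%nat -> fst (hf (2 * h) T i) 0%nat = kernel T (zrep h i).
Proof.
  intros HT. assert (Hh : (3 <= h)%nat) by lia. unfold kernel. revert T i HT.
  apply (ring_coef_eq_line h (fun T i => fst (hf (2 * h) T i) 0%nat)).
  - intros x Hx. unfold ind. destruct (Z.eqb_spec x 0); [lia|reflexivity].
  - reflexivity.
  - intros i. cbn [hf fst]. unfold ind. rewrite zrep_eqb_0, Nat.eqb_sym by lia. reflexivity.
  - intros s i. rewrite hf_S. unfold no_source. destruct (Nat.even _); cbn [fst]; [lra|reflexivity].
Qed.

Lemma hf_noise2_kernel h T i :
  (T + 3 <= h)%nat -> snd (hf (2 * h) T i) 2%nat 0%nat = noise2_coef T (zrep h i).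
Proof.
  intros HT. assert (Hh : (3 <= h)%nat) by lia. unfold noise2_coef. revert T i HT.
  apply (ring_coef_eq_line h (fun T i => snd (hf (2 * h) T i) 2%nat 0%nat)).
  - reflexivity.
  - intros u x Hx. unfold ind. destruct (Z.eqb_spec x 0); [lia|].
    rewrite Bool.andb_false_r. reflexivity.
  - reflexivity.
  - intros s i. rewrite hf_S. destruct (Nat.even _); cbn [snd]; [|reflexivity].
    unfold ind. rewrite zrep_eqb_0, (Nat.eqb_sym (S s) 2), (Nat.eqb_sym 0) by lia. reflexivity.
Qed.

Lemma hf_noise1_kernel h T i : (T + 3 <= h)%nat ->
  (snd (hf (2 * h) T i) 1%nat 1%nat + snd (hf (2 * h) T i) 1%nat (2 * h - 1)%nat) / 2
  = noise1_coef T (zrep h i).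
Proof.
  intros HT. assert (Hh : (3 <= h)%nat) by lia. unfold noise1_coef. revert T i HT.
  apply (ring_coef_eq_line h
    (fun T i => (snd (hf (2 * h) T i) 1%nat 1%nat + snd (hf (2 * h) T i) 1%nat (2 * h - 1)%nat) / 2)).
  - reflexivity.
  - intros u x Hx. unfold ind.
    destruct (Z.eqb_spec x 1), (Z.eqb_spec x (-1)); [lia..|lra].
  - intros i. cbn [hf snd]. lra.
  - intros s i. rewrite hf_S. destruct (Nat.even _); cbn [snd]; [|reflexivity].
    unfold ind. rewrite zrep_eqb_1, zrep_eqb_m1, (Nat.eqb_sym (S s) 1), (Nat.eqb_sym 1 (_ mod _)),
      (Nat.eqb_sym (2 * h - 1)) by lia.
    destruct (Nat.eqb 1 (S s)), (Nat.eqb (i mod (2 * h)) 1), (Nat.eqb (i mod (2 * h)) (2 * h - 1));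
      cbn [andb]; lra.
Qed.

Lemma hf_2_0 h : (3 <= h)%nat ->
  (forall k, fst (hf (2 * h) 2 0) k
             = (ind (Nat.eqb k (2 * h - 2)) + 2 * ind (Nat.eqb k 0) + ind (Nat.eqb k 2)) / 4) /\
  (forall u v, snd (hf (2 * h) 2 0) u v
             = (ind (Nat.eqb u 1 && Nat.eqb v (2 * h - 1)) + ind (Nat.eqb u 1 && Nat.eqb v 1)) / 2
               + ind (Nat.eqb u 2 && Nat.eqb v 0)).
Proof.
  intros Hh.
  assert (Hsmall : forall a, (a < 2 * h)%nat -> (a mod (2 * h) = a)%nat) by (intros; apply Nat.mod_small; lia).
  assert (Hwrap : forall a, (2 * h <= a < 4 * h)%nat -> (a mod (2 * h) = a - 2 * h)%nat).
  { intros a Ha. replace a with ((a - 2 * h) + 1 * (2 * h))%nat at 1 by lia.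
    rewrite Nat.Div0.mod_add. apply Hsmall. lia. }
  rewrite (hf_S (2 * h) 1 0), Hsmall by lia. change (Nat.even (0 + 2)) with true. cbv zeta.
  rewrite (hf_S (2 * h) 0 (0 + 2 * h - 1)), (hf_S (2 * h) 0 (0 + 1)), !Hsmall by lia.
  replace (Nat.even (0 + 2 * h - 1 + 1)) with true
    by (replace (0 + 2 * h - 1 + 1)%nat with (2 * h)%nat by lia; symmetry; apply Nat.even_even).
  change (Nat.even (0 + 1 + 1)) with true. cbv zeta. cbn [hf fst snd].
  rewrite (Hwrap (0 + 2 * h - 1 + 2 * h - 1)%nat) by lia.
  rewrite (Hwrap (0 + 2 * h - 1 + 1)%nat) by lia.
  rewrite (Hwrap (0 + 1 + 2 * h - 1)%nat) by lia.
  rewrite (Hsmall (0 + 1 + 1)%nat) by lia.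
  replace (0 + 2 * h - 1 + 2 * h - 1 - 2 * h)%nat with (2 * h - 2)%nat by lia.
  replace (0 + 2 * h - 1 + 1 - 2 * h)%nat with 0%nat by lia.
  replace (0 + 1 + 2 * h - 1 - 2 * h)%nat with 0%nat by lia.
  replace (0 + 2 * h - 1)%nat with (2 * h - 1)%nat by lia. split.
  - intros k. unfold ind. change (0 + 1 + 1)%nat with 2%nat. destruct (Nat.eqb k _), (Nat.eqb k 0), (Nat.eqb k 2); lra.
  - intros u v. unfold ind. change (0 + 1)%nat with 1%nat.
    destruct (Nat.eqb u 1), (Nat.eqb u 2), (Nat.eqb v _), (Nat.eqb v 1), (Nat.eqb v 0); cbn [andb]; lra.
Qed.

Section PairingWithH20.

Variable h : nat.
Hypothesis h_ge3 : (3 <= h)%nat.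

Let L := (2 * h)%nat.
Let Y := fsub (hf L 2 0) (hf L 0 0).

Lemma fst_Y k : fst Y k = / 4 * ind (Nat.eqb k (L - 2)) + / 4 * ind (Nat.eqb k 2) - / 2 * ind (Nat.eqb k 0).
Proof.
  unfold Y, fsub. cbn [fst]. rewrite (proj1 (hf_2_0 h h_ge3)). cbn [hf fst].
  rewrite Nat.Div0.mod_0_l. unfold ind. destruct (Nat.eqb k _), (Nat.eqb k 0), (Nat.eqb k 2); lra.
Qed.

Lemma cum_Y l : cum L (fst Y) l = / 4 * (if Nat.ltb l (L - 2) then 1 else 0) + / 4 * (if Nat.ltb l 2 then 1 else 0).
Proof.
  unfold cum.
  rewrite (sumR_ext _ _ (fun i => (if Nat.eqb i (L - 2) then / 4 * (if Nat.ltb l (L - 2) then 1 else 0) else 0)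
    + (if Nat.eqb i 2 then / 4 * (if Nat.ltb l 2 then 1 else 0) else 0)
    + (if Nat.eqb i 0 then - / 2 * (if Nat.ltb l 0 then 1 else 0) else 0))).
  - rewrite !sumR_add, !sumR_delta. unfold L.
    destruct (Nat.ltb_spec (2 * h - 2) (2 * h)), (Nat.ltb_spec 2 (2 * h)), (Nat.ltb_spec 0 (2 * h)),
      (Nat.ltb_spec l 0); lia || lra.
  - intros i _. rewrite fst_Y. unfold ind.
    destruct (Nat.eqb_spec i (L - 2)), (Nat.eqb_spec i 2), (Nat.eqb_spec i 0); subst;
      unfold L in *; try lia;
      repeat match goal with |- context [Nat.ltb ?a ?b] => destruct (Nat.ltb_spec a b) end; lia || lra.
Qed.

Lemma init_cov_Y (x : nat -> R) :
  sumR L x = 0 -> x 1%nat = 0 -> x (L - 1)%nat = 0 ->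
  sumR L (fun k => sumR L (fun l =>
    cum L x k * cum L (fst Y) l * ((if Nat.eqb k l then 1 else 0) - / INR L))) = - / 2 * x 0%nat.
Proof.
  intros Hsum Hx1 HxL. rewrite sumR_centered_cov.
  assert (HLpos : INR L <> 0) by (apply not_0_INR; unfold L; lia).
  assert (Hmean : / INR L * sumR L (cum L (fst Y)) = / 4).
  { rewrite (sumR_ext _ _ _ (fun l _ => cum_Y l)). rewrite sumR_add, !sumR_scal, !sumR_count_lt.
    replace (Nat.min L (L - 2)) with (L - 2)%nat by (unfold L; lia).
    replace (Nat.min L 2) with 2%nat by (unfold L; lia).
    rewrite minus_INR by (unfold L; lia). field. exact HLpos. }
  assert (Hhead : sumR (L - 1) x = 0).
  { replace L with (S (L - 1)) in Hsum by (unfold L; lia). cbn [sumR] in Hsum. lra. }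
  rewrite Hmean.
  rewrite (sumR_ext _ _ (fun k => (if Nat.eqb k 0 then / 4 * cum L x 0 else 0)
    + (if Nat.eqb k 1 then / 4 * cum L x 1 else 0)
    + (if Nat.eqb k (L - 2) then - / 4 * cum L x (L - 2) else 0)
    + (if Nat.eqb k (L - 1) then - / 4 * cum L x (L - 1) else 0))).
  - rewrite !sumR_add, !sumR_delta.
    rewrite !cum_eq by (unfold L; lia).
    replace (S (L - 2)) with (L - 1)%nat by (unfold L; lia).
    replace (S (L - 1)) with L by (unfold L; lia).
    rewrite Hsum, Hhead. cbn [sumR]. rewrite Hx1.
    unfold L; repeat match goal with |- context [Nat.ltb ?a ?b] => destruct (Nat.ltb_spec a b) end;
      lia || lra.
  - intros k Hk. rewrite cum_Y. unfold L in *.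
    destruct (Nat.eqb_spec k 0), (Nat.eqb_spec k 1), (Nat.eqb_spec k (2 * h - 2)),
      (Nat.eqb_spec k (2 * h - 1)); subst; try lia;
      repeat match goal with |- context [Nat.ltb ?a ?b] => destruct (Nat.ltb_spec a b) end; lia || lra.
Qed.

Lemma noise_cov_Y (N : nat) (s : nat -> nat -> R) : (2 <= N)%nat ->
  sumR N (fun u => sumR L (fun v => / 2 * s (S u) v * snd Y (S u) v))
  = / 4 * (s 1%nat 1%nat + s 1%nat (L - 1)%nat) + / 2 * s 2%nat 0%nat.
Proof.
  intros HN.
  rewrite (sumR_ext _ _ (fun u => (if Nat.eqb u 0 then / 4 * (s 1%nat 1%nat + s 1%nat (L - 1)%nat) else 0)
                                 + (if Nat.eqb u 1 then / 2 * s 2%nat 0%nat else 0))).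
  - rewrite sumR_add, !sumR_delta.
    destruct (Nat.ltb_spec 0 N), (Nat.ltb_spec 1 N); lia || lra.
  - intros u _.
    rewrite (sumR_ext _ _ (fun v => (if Nat.eqb v 1 then / 4 * ind (Nat.eqb u 0) * s (S u) 1%nat else 0)
      + (if Nat.eqb v (L - 1) then / 4 * ind (Nat.eqb u 0) * s (S u) (L - 1)%nat else 0)
      + (if Nat.eqb v 0 then / 2 * ind (Nat.eqb u 1) * s (S u) 0%nat else 0))).
    + rewrite !sumR_add, !sumR_delta. unfold ind, L.
      destruct (Nat.eqb_spec u 0), (Nat.eqb_spec u 1); subst;
        repeat match goal with |- context [Nat.ltb ?a ?b] => destruct (Nat.ltb_spec a b) end; lia || lra.
    + intros v _. unfold Y, fsub. cbn [snd]. rewrite (proj2 (hf_2_0 h h_ge3)). cbn [hf snd]. unfold ind, L.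
      destruct (Nat.eqb_spec v 1), (Nat.eqb_spec v (2 * h - 1)), (Nat.eqb_spec v 0); subst; try lia;
        destruct u as [|[|u]]; cbn [Nat.eqb andb]; lra.
Qed.

Lemma EL_h2_0 N X : (2 <= N)%nat ->
  sumR L (fst X) = 0 -> fst X 1%nat = 0 -> fst X (L - 1)%nat = 0 ->
  EL L N X (fsub (hZ L 2 0) (hZ L 0 0))
  = - / 2 * fst X 0%nat + / 4 * (snd X 1%nat 1%nat + snd X 1%nat (L - 1)%nat) + / 2 * snd X 2%nat 0%nat.
Proof.
  intros HN Hsum Hx1 HxL.
  assert (HhZ : forall T, hZ L T 0 = hf L T 0) by (intros; unfold hZ; rewrite Zmod_0_l; reflexivity).
  unfold EL. rewrite !HhZ. fold Y. rewrite init_cov_Y, noise_cov_Y by assumption. lra.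
Qed.

End PairingWithH20.

Lemma zrep_Z_mod h j :
  (1 <= h)%nat -> (Z.abs j < Z.of_nat h)%Z -> zrep h (Z.to_nat (j mod Z.of_nat (2 * h))) = j.
Proof.
  intros Hh Hj.
  assert (Hm : (0 <= j mod Z.of_nat (2 * h) < Z.of_nat (2 * h))%Z) by (apply Z.mod_pos_bound; lia).
  unfold zrep. rewrite Nat.mod_small by lia.
  destruct (Z_le_gt_dec 0 j).
  - rewrite Z.mod_small by lia. destruct (Nat.leb_spec (Z.to_nat j) h); lia.
  - assert (E : (j mod Z.of_nat (2 * h) = j + Z.of_nat (2 * h))%Z).
    { rewrite <- (Z_mod_plus_full j 1), Z.mul_1_l. apply Z.mod_small. lia. }
    rewrite E. destruct (Nat.leb_spec (Z.to_nat (j + Z.of_nat (2 * h))) h); lia.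
Qed.

Lemma cov_increments_eq h t j : (1 <= t)%nat -> (2 * t + 5 <= h)%nat -> (Z.abs j < Z.of_nat h)%Z ->
  EL (2 * h) (2 * t + 2)
     (fsub (hZ (2 * h) (2 * t + 2) j) (hZ (2 * h) (2 * t) j))
     (fsub (hZ (2 * h) 2 0) (hZ (2 * h) 0 0))
  = / 2 * (kernel (2 * t) j - kernel (2 * t - 2) j).
Proof.
  intros Ht Hh Hj. unfold hZ at 1 2. set (r := Z.to_nat (j mod Z.of_nat (2 * h))).
  assert (Hr : zrep h r = j) by (apply zrep_Z_mod; lia).
  rewrite EL_h2_0; unfold fsub; cbn [fst snd]; try lia.
  - assert (E1a : noise1_coef (2 * t + 2) j = kernel (2 * t + 2) j).
    { replace (2 * t + 2)%nat with (2 + 2 * t)%nat by lia. apply noise1_coef_kernel. }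
    assert (E1b : noise1_coef (2 * t) j = kernel (2 * t) j).
    { replace (2 * t)%nat with (2 + (2 * t - 2))%nat by lia. apply noise1_coef_kernel. }
    assert (E2a : noise2_coef (2 * t + 2) j = kernel (2 * t) j).
    { replace (2 * t + 2)%nat with (2 + 2 * t)%nat by lia. apply noise2_coef_kernel. }
    assert (E2b : noise2_coef (2 * t) j = kernel (2 * t - 2) j).
    { replace (2 * t)%nat with (2 + (2 * t - 2))%nat at 1 by lia. apply noise2_coef_kernel. }
    pose proof (hf_noise1_kernel h (2 * t + 2) r ltac:(lia)) as N1a.
    pose proof (hf_noise1_kernel h (2 * t) r ltac:(lia)) as N1b.
    rewrite !hf_init0_kernel, !hf_noise2_kernel, Hr in * by lia. lra.
  - rewrite sumR_sub, !hf_init_sum by lia. lra.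
  - rewrite !hf_init_odd by (reflexivity || lia). lra.
  - assert (Hodd : Nat.even (2 * h - 1) = false).
    { replace (2 * h - 1)%nat with (2 * (h - 1) + 1)%nat by lia. apply Nat.even_odd. }
    rewrite !hf_init_odd by (assumption || lia). lra.
Qed.

Theorem proposition1 (t : nat) (j : Z) :
  (1 <= t)%nat -> Z.Even j ->
  Un_cv
    (fun n => EL (2 * n + 2) (2 * t + 2)
                 (fsub (hZ (2 * n + 2) (2 * t + 2) j) (hZ (2 * n + 2) (2 * t) j))
                 (fsub (hZ (2 * n + 2) 2 0) (hZ (2 * n + 2) 0 0)))
    (- / 4 * (g11 (t - 1) j - g11 t j)).
Proof.
  intros Ht Hj eps Heps. exists (2 * t + 5 + Z.to_nat (Z.abs j))%nat. intros n Hn.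
  replace (2 * n + 2)%nat with (2 * (n + 1))%nat by lia.
  rewrite cov_increments_eq, !g11_kernel by (assumption || lia).
  replace (2 * (t - 1))%nat with (2 * t - 2)%nat by lia.
  unfold R_dist. replace (_ - _) with 0 by lra. rewrite Rabs_R0. exact Heps.
Qed.
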